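(* The variety $\mathcal{WHB}$ of WHB-algebras has the finite model property, i.e. every equation that fails in some WHB-algebra fails in some finite WHB-algebra.
   Context: A WHB-algebra is an algebra $(A,\wedge,\vee,\to,\leftarrow,0,1)$ such that $(A,\wedge,\vee,0,1)$ is a bounded distributive lattice and for all $a,b,c\in A$: $a\to a=1$; $a\to(b\wedge c)=(a\to b)\wedge(a\to c)$; $(a\vee b)\to c=(a\to c)\wedge(b\to c)$; $(a\to b)\wedge(b\to c)\le a\to c$; $a\leftarrow a=0$; $(a\vee b)\leftarrow c=(a\leftarrow c)\vee(b\leftarrow c)$; $a\leftarrow(b\wedge c)=(a\leftarrow b)\vee(a\leftarrow c)$; $a\leftarrow c\le(a\leftarrow b)\vee(b\leftarrow c)$; $a\wedge((a\to b)\leftarrow 0)\le b$; $a\le b\vee(1\to(a\leftarrow b))$. *)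

From Stdlib Require Import List.

Record WHBAlgebra := {
  carrier :> Type;
  meet : carrier -> carrier -> carrier;
  join : carrier -> carrier -> carrier;
  imp : carrier -> carrier -> carrier;
  coimp : carrier -> carrier -> carrier;
  bot : carrier;
  top : carrier;
  meet_assoc : forall a b c, meet a (meet b c) = meet (meet a b) c;
  join_assoc : forall a b c, join a (join b c) = join (join a b) c;
  meet_comm : forall a b, meet a b = meet b a;
  join_comm : forall a b, join a b = join b a;
  meet_absorb : forall a b, meet a (join a b) = a;
  join_absorb : forall a b, join a (meet a b) = a;
  meet_join_distr : forall a b c, meet a (join b c) = join (meet a b) (meet a c);
  join_bot : forall a, join a bot = a;
  meet_top : forall a, meet a top = a;
  (* WHB axioms; x <= y is written join x y = y *)
  imp_refl : forall a, imp a a = top;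
  imp_meet : forall a b c, imp a (meet b c) = meet (imp a b) (imp a c);
  imp_join : forall a b c, imp (join a b) c = meet (imp a c) (imp b c);
  imp_trans : forall a b c,
      join (meet (imp a b) (imp b c)) (imp a c) = imp a c;
  coimp_refl : forall a, coimp a a = bot;
  coimp_join : forall a b c, coimp (join a b) c = join (coimp a c) (coimp b c);
  coimp_meet : forall a b c, coimp a (meet b c) = join (coimp a b) (coimp a c);
  coimp_trans : forall a b c,
      join (coimp a c) (join (coimp a b) (coimp b c)) = join (coimp a b) (coimp b c);
  mp_axiom : forall a b, join (meet a (coimp (imp a b) bot)) b = b;
  cmp_axiom : forall a b, join a (join b (imp top (coimp a b))) = join b (imp top (coimp a b))
}.

Definition le (A : WHBAlgebra) (x y : A) : Prop := join A x y = y.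

Inductive term : Type :=
| tVar : nat -> term
| tMeet : term -> term -> term
| tJoin : term -> term -> term
| tImp : term -> term -> term
| tCoimp : term -> term -> term
| tBot : term
| tTop : term.

Fixpoint eval (A : WHBAlgebra) (v : nat -> A) (t : term) : A :=
  match t with
  | tVar n => v n
  | tMeet s u => meet A (eval A v s) (eval A v u)
  | tJoin s u => join A (eval A v s) (eval A v u)
  | tImp s u => imp A (eval A v s) (eval A v u)
  | tCoimp s u => coimp A (eval A v s) (eval A v u)
  | tBot => bot A
  | tTop => top A
  end.

Definition fails_in (A : WHBAlgebra) (s t : term) : Prop :=
  exists v : nat -> A, eval A v s <> eval A v t.

Definition finite_algebra (A : WHBAlgebra) : Prop :=
  exists l : list A, forall x : A, In x l.

(* Let [s = t] fail in [A] under [v], and let D be the bounded sublattice of [A] generated by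
   the values of the subterms of [s] and [t]; D is finite.  Its join-prime elements ("points"),
   with [p R q] iff [p ≰ κ p ⊔ (q ⇒ κ q)], where [κ p] is the largest element of D not above
   [p], form a finite frame whose complex algebra is a WHB-algebra.  The map sending [a] to the
   set of points below [a] commutes with all operations on arguments in D: the witnesses
   required for [⇒] and [⇐] are minimal elements of D outside suitable ideals, and such minimal
   elements are automatically points.  This map is injective on D, so [s = t] fails in the
   finite algebra. *)
From Stdlib Require Import List Classical ClassicalEpsilon FunctionalExtensionality
  PropExtensionality ProofIrrelevance RelationClasses.
Import ListNotations.

Definition holds (P : Prop) : bool := if excluded_middle_informative P then true else false.

Lemma holds_true (P : Prop) : holds P = true <-> P.
Proof. unfold holds; destruct (excluded_middle_informative P); split; auto; discriminate. Qed.

Fixpoint sublists {X : Type} (l : list X) : list (list X) :=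
  match l with
  | [] => [[]]
  | a :: r => map (cons a) (sublists r) ++ sublists r
  end.

Lemma filter_in_sublists {X : Type} (f : X -> bool) (l : list X) : In (filter f l) (sublists l).
Proof.
  induction l as [|a r IH]; simpl; [left; reflexivity|].
  apply in_or_app. destruct (f a); [left; apply in_map|right]; exact IH.
Qed.

Definition sublist_repr {X : Type} (l s : list X) : list X := filter (fun x => holds (In x s)) l.

Lemma sublist_repr_in_sublists {X : Type} (l s : list X) : In (sublist_repr l s) (sublists l).
Proof. apply filter_in_sublists. Qed.

Lemma in_sublist_repr {X : Type} (l s : list X) x : incl s l -> In x (sublist_repr l s) <-> In x s.
Proof.
  intro Hs. unfold sublist_repr. rewrite filter_In, holds_true.
  split; [tauto|]. intro Hx. split; [apply Hs|]; exact Hx.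
Qed.

Lemma listing_sig {X : Type} (P : X -> Prop) (l : list X) :
  (forall x, P x -> In x l) -> exists l' : list {x | P x}, forall y, In y l'.
Proof.
  intro Hl.
  assert (Hsub : forall l0, exists l', forall y : {x | P x}, In (proj1_sig y) l0 -> In y l').
  { induction l0 as [|a r [l' IH]]; [exists []; intros y []|].
    destruct (excluded_middle_informative (P a)) as [Ha|Ha].
    - exists (exist P a Ha :: l'). intros [y Hy]; simpl; intros [<-|Hin].
      + left. f_equal. apply proof_irrelevance.
      + right. exact (IH (exist P y Hy) Hin).
    - exists l'. intros [y Hy]; simpl; intros [<-|Hin]; [contradiction|].
      exact (IH (exist P y Hy) Hin). }
  destruct (Hsub l) as [l' Hl']. exists l'. intro y. apply Hl', Hl, proj2_sig.
Qed.

Lemma listing_pred {X : Type} (l : list X) :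
  (forall x, In x l) -> exists L : list (X -> Prop), forall U, In U L.
Proof.
  intro Hl. exists (map (fun s x => In x s) (sublists l)). intro U.
  apply in_map_iff. exists (filter (fun x => holds (U x)) l). split; [|apply filter_in_sublists].
  extensionality x. apply propositional_extensionality. rewrite filter_In, holds_true.
  split; [tauto|]. intro HU. split; [apply Hl|exact HU].
Qed.

Lemma list_min {X : Type} (R : X -> X -> Prop) (Rrefl : Reflexive R) (Rtrans : Transitive R)
    (P : X -> Prop) (l : list X) (c : X) :
  In c l -> P c -> exists p, In p l /\ P p /\ forall z, In z l -> P z -> R z p -> R p z.
Proof.
  revert c. induction l as [|a r IH]; intros c Hc HPc; [destruct Hc|].
  destruct (classic (exists c', In c' r /\ P c')) as [[c' [Hc' HPc']]|Hnone].
  - destruct (IH c' Hc' HPc') as [p [Hp [HPp Hmin]]].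
    destruct (classic (P a /\ R a p /\ ~ R p a)) as [[HPa [Hap Hpa]]|Hkeep].
    + exists a. split; [left; reflexivity|split; [exact HPa|]].
      intros z [<-|Hz] HPz Hza; [reflexivity|].
      apply (Rtrans _ p _ Hap), Hmin; [exact Hz|exact HPz|exact (Rtrans _ _ _ Hza Hap)].
    + exists p. split; [right; exact Hp|split; [exact HPp|]].
      intros z [<-|Hz] HPz Hzp; [|exact (Hmin z Hz HPz Hzp)].
      apply NNPP. intro Hpz. apply Hkeep. auto.
  - destruct Hc as [<-|Hc]; [|exfalso; eauto].
    exists a. split; [left; reflexivity|split; [exact HPc|]].
    intros z [<-|Hz] HPz _; [reflexivity|exfalso; eauto].
Qed.

Fixpoint subterms (u : term) : list term :=
  u :: match u with
       | tMeet a b | tJoin a b | tImp a b | tCoimp a b => subterms a ++ subterms b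
       | _ => []
       end.

Lemma in_subterms_self u : In u (subterms u).
Proof. destruct u; left; reflexivity. Qed.

Section ComplexAlgebra.
Variables (X : Type) (R : X -> X -> Prop).

Definition complex_algebra : WHBAlgebra.
Proof.
  refine {| carrier := X -> Prop;
            meet U V x := U x /\ V x;
            join U V x := U x \/ V x;
            imp U V x := forall y, R x y -> U y -> V y;
            coimp U V x := exists y, R y x /\ U y /\ ~ V y;
            bot _ := False;
            top _ := True |};
  intros; extensionality x; apply propositional_extensionality; firstorder.
  - destruct (classic (b x0)); [right|left]; exists x0; tauto.
  - destruct (classic (b x0)); [right|left]; exists x0; tauto.
  - destruct (classic (b x)); [left; assumption|right]. intros y Hy _. exists x. tauto.
Defined.

Lemma complex_algebra_finite :
  (exists l : list X, forall x, In x l) -> finite_algebra complex_algebra.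
Proof. intros [l Hl]. exact (listing_pred l Hl). Qed.

End ComplexAlgebra.

Section WHBTheory.
Variable A : WHBAlgebra.

Local Notation "x ⊓ y" := (meet A x y) (at level 40, left associativity).
Local Notation "x ⊔ y" := (join A x y) (at level 50, left associativity).
Local Notation "x ⇒ y" := (imp A x y) (at level 45, no associativity).
Local Notation "x ⇐ y" := (coimp A x y) (at level 45, no associativity).
Local Notation "⊥" := (bot A).
Local Notation "⊤" := (top A).
Local Notation "x ≤ y" := (le A x y) (at level 70, no associativity).

Lemma join_idem a : a ⊔ a = a.
Proof. rewrite <- (meet_absorb A a a) at 2. apply join_absorb. Qed.

Lemma le_refl a : a ≤ a.
Proof. apply join_idem. Qed.

Lemma le_trans a b c : a ≤ b -> b ≤ c -> a ≤ c.
Proof. unfold le; intros Hab Hbc. rewrite <- Hbc, join_assoc, Hab. reflexivity. Qed.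

Lemma le_antisym a b : a ≤ b -> b ≤ a -> a = b.
Proof. unfold le; intros Hab Hba. rewrite <- Hab, join_comm. symmetry; exact Hba. Qed.

Lemma le_iff_meet a b : a ≤ b <-> a ⊓ b = a.
Proof.
  unfold le; split; intro H.
  - rewrite <- H. apply meet_absorb.
  - rewrite <- H, join_comm, meet_comm. apply join_absorb.
Qed.

Lemma meet_lb_l a b : a ⊓ b ≤ a.
Proof.
  apply le_iff_meet. rewrite (meet_comm A (a ⊓ b) a), meet_assoc.
  rewrite <- (join_absorb A a a) at 2. rewrite meet_absorb. reflexivity.
Qed.

Lemma meet_lb_r a b : a ⊓ b ≤ b.
Proof. rewrite meet_comm. apply meet_lb_l. Qed.

Lemma meet_glb x a b : x ≤ a -> x ≤ b -> x ≤ a ⊓ b.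
Proof. rewrite !le_iff_meet. intros Ha Hb. rewrite meet_assoc, Ha, Hb. reflexivity. Qed.

Lemma le_meet_iff x a b : x ≤ a ⊓ b <-> x ≤ a /\ x ≤ b.
Proof.
  split; [|intros []; apply meet_glb; assumption].
  intro H. split; eapply le_trans; eauto using meet_lb_l, meet_lb_r.
Qed.

Lemma join_ub_l a b : a ≤ a ⊔ b.
Proof. unfold le. rewrite join_assoc, join_idem. reflexivity. Qed.

Lemma join_ub_r a b : b ≤ a ⊔ b.
Proof. rewrite join_comm. apply join_ub_l. Qed.

Lemma join_lub a b c : a ≤ c -> b ≤ c -> a ⊔ b ≤ c.
Proof. unfold le; intros Ha Hb. rewrite <- join_assoc, Hb, Ha. reflexivity. Qed.

Lemma bot_le a : ⊥ ≤ a.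
Proof. unfold le. rewrite join_comm. apply join_bot. Qed.

Lemma le_top a : a ≤ ⊤.
Proof. apply le_iff_meet, meet_top. Qed.

Lemma meet_mono a a' b b' : a ≤ a' -> b ≤ b' -> a ⊓ b ≤ a' ⊓ b'.
Proof.
  intros Ha Hb. apply meet_glb; [apply le_trans with a|apply le_trans with b];
    auto using meet_lb_l, meet_lb_r.
Qed.

Lemma join_mono a a' b b' : a ≤ a' -> b ≤ b' -> a ⊔ b ≤ a' ⊔ b'.
Proof.
  intros Ha Hb. apply join_lub; [apply le_trans with a'|apply le_trans with b'];
    auto using join_ub_l, join_ub_r.
Qed.

Lemma meet_join_distr_r a b c : (a ⊔ b) ⊓ c = a ⊓ c ⊔ b ⊓ c.
Proof. rewrite meet_comm, meet_join_distr, (meet_comm A c a), (meet_comm A c b). reflexivity. Qed.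

Lemma join_meet_distr_le a b c : (a ⊔ b) ⊓ (a ⊔ c) ≤ a ⊔ b ⊓ c.
Proof.
  rewrite meet_join_distr_r. apply join_lub.
  - apply le_trans with a; [apply meet_lb_l|apply join_ub_l].
  - rewrite meet_join_distr. apply join_lub; [|apply join_ub_r].
    apply le_trans with a; [apply meet_lb_r|apply join_ub_l].
Qed.

Lemma imp_antitone_l a a' b : a ≤ a' -> a' ⇒ b ≤ a ⇒ b.
Proof. intro H. unfold le at 1 in H. rewrite <- H, imp_join. apply meet_lb_l. Qed.

Lemma imp_monotone_r a b b' : b ≤ b' -> a ⇒ b ≤ a ⇒ b'.
Proof. intro H. apply le_iff_meet in H. rewrite <- H, imp_meet. apply meet_lb_r. Qed.

Lemma imp_top_of_le a b : a ≤ b -> a ⇒ b = ⊤.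
Proof.
  intro H. apply le_antisym; [apply le_top|].
  rewrite <- (imp_refl A a). apply imp_monotone_r, H.
Qed.

Lemma coimp_monotone_l a a' b : a ≤ a' -> a ⇐ b ≤ a' ⇐ b.
Proof. intro H. unfold le at 1 in H. rewrite <- H, coimp_join. apply join_ub_l. Qed.

Lemma coimp_antitone_r a b b' : b ≤ b' -> a ⇐ b' ≤ a ⇐ b.
Proof. intro H. apply le_iff_meet in H. rewrite <- H, coimp_meet. apply join_ub_r. Qed.

Lemma coimp_le_bot a b : a ≤ b -> a ⇐ b ≤ ⊥.
Proof.
  intro H. rewrite <- (coimp_refl A b). apply coimp_monotone_l, H.
Qed.

(* A residuation law for [⇒] and [⇐]; this is where [mp_axiom] and [cmp_axiom] enter. *)
Lemma le_join_imp_iff p q a b : p ≤ a ⊔ (q ⇒ b) <-> q ⊓ (p ⇐ a) ≤ b.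
Proof.
  split; intro H.
  - eapply le_trans; [|apply (mp_axiom A q b)]. apply meet_mono; [apply le_refl|].
    eapply le_trans; [apply coimp_monotone_l, H|]. rewrite coimp_join, coimp_refl.
    apply join_lub; [apply bot_le|]. apply coimp_antitone_r, bot_le.
  - eapply le_trans; [apply (cmp_axiom A p a)|]. apply join_mono; [apply le_refl|].
    eapply le_trans; [apply (imp_antitone_l q), le_top|].
    eapply le_trans; [|apply imp_monotone_r, H].
    rewrite imp_meet, imp_refl. apply meet_glb; [apply le_top|apply le_refl].
Qed.

Definition joinl (l : list A) : A := fold_right (join A) ⊥ l.
Definition meetl (l : list A) : A := fold_right (meet A) ⊤ l.

Lemma joinl_ub x l : In x l -> x ≤ joinl l.
Proof.
  induction l as [|a l IH]; simpl; [tauto|]. intros [->|H]; [apply join_ub_l|].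
  apply le_trans with (joinl l); [apply IH, H|apply join_ub_r].
Qed.

Lemma joinl_lub l z : (forall x, In x l -> x ≤ z) -> joinl l ≤ z.
Proof. induction l as [|a l IH]; simpl; intro H; [apply bot_le|]. apply join_lub; auto. Qed.

Lemma meetl_lb x l : In x l -> meetl l ≤ x.
Proof.
  induction l as [|a l IH]; simpl; [tauto|]. intros [->|H]; [apply meet_lb_l|].
  apply le_trans with (meetl l); [apply meet_lb_r|apply IH, H].
Qed.

Lemma meetl_glb l z : (forall x, In x l -> z ≤ x) -> z ≤ meetl l.
Proof. induction l as [|a l IH]; simpl; intro H; [apply le_top|]. apply meet_glb; auto. Qed.

Lemma joinl_ext l l' : (forall x, In x l <-> In x l') -> joinl l = joinl l'.
Proof. intro H. apply le_antisym; apply joinl_lub; intros; apply joinl_ub, H; assumption. Qed.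

Lemma meetl_ext l l' : (forall x, In x l <-> In x l') -> meetl l = meetl l'.
Proof. intro H. apply le_antisym; apply meetl_glb; intros; apply meetl_lb, H; assumption. Qed.

Lemma joinl_app l l' : joinl (l ++ l') = joinl l ⊔ joinl l'.
Proof.
  induction l as [|a l IH]; simpl.
  - rewrite join_comm. symmetry. apply join_bot.
  - rewrite IH. apply join_assoc.
Qed.

Lemma meetl_app l l' : meetl (l ++ l') = meetl l ⊓ meetl l'.
Proof.
  induction l as [|a l IH]; simpl.
  - rewrite meet_comm. symmetry. apply meet_top.
  - rewrite IH. apply meet_assoc.
Qed.

Lemma meetl_meet_joinl s S :
  meetl s ⊓ joinl (map meetl S) = joinl (map meetl (map (app s) S)).
Proof.
  induction S as [|s' S IH]; simpl.
  - apply le_antisym; [apply meet_lb_r|apply bot_le].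
  - rewrite meet_join_distr, IH, meetl_app. reflexivity.
Qed.

Lemma joinl_meetl_meet S S' :
  joinl (map meetl S) ⊓ joinl (map meetl S') =
  joinl (map meetl (flat_map (fun s => map (app s) S') S)).
Proof.
  induction S as [|s S IH]; simpl.
  - apply le_antisym; [apply meet_lb_l|apply bot_le].
  - rewrite meet_join_distr_r, IH, map_app, joinl_app, meetl_meet_joinl. reflexivity.
Qed.

Definition is_ideal (Q : A -> Prop) : Prop :=
  Q ⊥ /\ (forall x y, Q x -> Q y -> Q (x ⊔ y)) /\ (forall x y, x ≤ y -> Q y -> Q x).

Lemma le_is_ideal b : is_ideal (fun x => x ≤ b).
Proof.
  split; [apply bot_le|split]; intros x y; [apply join_lub|].
  intros Hxy Hyb. apply le_trans with y; assumption.
Qed.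

Section Filtration.
Variable G : list A.

Definition in_sublattice (x : A) : Prop :=
  exists S : list (list A), (forall s, In s S -> incl s G) /\ x = joinl (map meetl S).

Lemma in_sublattice_bot : in_sublattice ⊥.
Proof. exists []. split; [intros s []|reflexivity]. Qed.

Lemma in_sublattice_gen g : In g G -> in_sublattice g.
Proof.
  intro Hg. exists [[g]]. split.
  - intros s [<-|[]] x [<-|[]]. exact Hg.
  - simpl. rewrite join_bot, meet_top. reflexivity.
Qed.

Lemma in_sublattice_join x y : in_sublattice x -> in_sublattice y -> in_sublattice (x ⊔ y).
Proof.
  intros [S [HS ->]] [S' [HS' ->]]. exists (S ++ S'). split.
  - intros s Hs. apply in_app_or in Hs. destruct Hs; auto.
  - rewrite map_app, joinl_app. reflexivity.
Qed.

Lemma in_sublattice_meet x y : in_sublattice x -> in_sublattice y -> in_sublattice (x ⊓ y).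
Proof.
  intros [S [HS ->]] [S' [HS' ->]]. exists (flat_map (fun s => map (app s) S') S). split.
  - intros s Hs. apply in_flat_map in Hs. destruct Hs as [s1 [Hs1 Hs]].
    apply in_map_iff in Hs. destruct Hs as [s2 [<- Hs2]]. apply incl_app; auto.
  - apply joinl_meetl_meet.
Qed.

Lemma in_sublattice_joinl l : (forall x, In x l -> in_sublattice x) -> in_sublattice (joinl l).
Proof.
  induction l as [|a l IH]; simpl; intro H; [apply in_sublattice_bot|].
  apply in_sublattice_join; auto.
Qed.

Definition sublattice_list : list A :=
  map (fun S => joinl (map meetl S)) (sublists (sublists G)).

Lemma in_sublattice_list x : in_sublattice x -> In x sublattice_list.
Proof.
  intros [S [HS ->]].
  set (S1 := map (sublist_repr G) S).
  assert (HS1 : joinl (map meetl S1) = joinl (map meetl S)).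
  { unfold S1. rewrite map_map. f_equal. apply map_ext_in. intros s Hs.
    apply meetl_ext. intro g. apply in_sublist_repr, HS, Hs. }
  assert (HS1G : incl S1 (sublists G)).
  { intros s Hs. apply in_map_iff in Hs. destruct Hs as [s0 [<- _]].
    apply sublist_repr_in_sublists. }
  apply in_map_iff. exists (sublist_repr (sublists G) S1). split.
  - rewrite <- HS1. apply joinl_ext. intro y. rewrite !in_map_iff.
    setoid_rewrite (in_sublist_repr _ _ _ HS1G). reflexivity.
  - apply sublist_repr_in_sublists.
Qed.

Local Notation D := in_sublattice.

Definition is_point (p : A) : Prop :=
  D p /\ ~ p ≤ ⊥ /\ forall x y, D x -> D y -> p ≤ x ⊔ y -> p ≤ x \/ p ≤ y.

Definition max_not_above (p : A) : A :=
  joinl (filter (fun x => holds (D x /\ ~ p ≤ x)) sublattice_list).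

Lemma max_not_above_in p : D (max_not_above p).
Proof.
  apply in_sublattice_joinl. intros x Hx.
  apply filter_In in Hx. destruct Hx as [_ Hx]. rewrite holds_true in Hx. apply Hx.
Qed.

Lemma le_max_not_above p x : D x -> ~ p ≤ x -> x ≤ max_not_above p.
Proof.
  intros Hx Hpx. apply joinl_ub, filter_In. split; [apply in_sublattice_list, Hx|].
  apply holds_true. split; assumption.
Qed.

Lemma point_not_le_joinl p l :
  is_point p -> (forall x, In x l -> D x /\ ~ p ≤ x) -> ~ p ≤ joinl l.
Proof.
  intros [_ [Hp0 Hprime]]. induction l as [|x l IH]; simpl; intros Hl; [exact Hp0|].
  intro Hle. apply Hprime in Hle; [|apply Hl; left; reflexivity|].
  - destruct Hle as [Hle|Hle]; [apply (Hl x); [left; reflexivity|exact Hle]|].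
    revert Hle. apply IH. intros y Hy. apply Hl. right. exact Hy.
  - apply in_sublattice_joinl. intros y Hy. apply Hl. right. exact Hy.
Qed.

Lemma point_not_le_max p : is_point p -> ~ p ≤ max_not_above p.
Proof.
  intro Hp. apply point_not_le_joinl; [exact Hp|]. intros x Hx.
  apply filter_In in Hx. destruct Hx as [_ Hx]. rewrite holds_true in Hx. exact Hx.
Qed.

Local Notation κ := max_not_above.

(* [p ⊓ κ p] is the largest element of D strictly below the point [p]. *)
Lemma point_outside_ideal Q c :
  is_ideal Q -> D c -> ~ Q c -> exists p, is_point p /\ p ≤ c /\ ~ Q p /\ Q (p ⊓ κ p).
Proof.
  intros HQ Hc HQc.
  destruct (list_min (le A) le_refl le_trans (fun x => D x /\ x ≤ c /\ ~ Q x) sublattice_list c)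
    as [p [_ [[Hp [Hpc HQp]] Hmin]]].
  { apply in_sublattice_list, Hc. }
  { split; [exact Hc|split; [apply le_refl|exact HQc]]. }
  assert (Hbelow : forall z, D z -> ~ Q (p ⊓ z) -> p ≤ z).
  { intros z Hz HQz. apply le_trans with (p ⊓ z); [|apply meet_lb_r].
    apply Hmin; [apply in_sublattice_list, in_sublattice_meet; assumption| |apply meet_lb_l].
    split; [apply in_sublattice_meet; assumption|split; [|exact HQz]].
    apply le_trans with p; [apply meet_lb_l|exact Hpc]. }
  destruct HQ as [Q0 [Qjoin Qdown]].
  assert (Hpt : is_point p).
  { split; [exact Hp|split].
    - intro Hp0. exact (HQp (Qdown _ _ Hp0 Q0)).
    - intros x y Hx Hy Hxy.
      destruct (classic (Q (p ⊓ x))) as [Qx|Qx]; [right|left; apply Hbelow; assumption].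
      apply Hbelow; [exact Hy|]. intro Qy. apply HQp.
      apply (Qdown _ (p ⊓ x ⊔ p ⊓ y)); [|apply Qjoin; assumption].
      rewrite <- meet_join_distr. apply meet_glb; [apply le_refl|exact Hxy]. }
  exists p. split; [exact Hpt|split; [exact Hpc|split; [exact HQp|]]].
  apply NNPP. intro HQm. apply (point_not_le_max p Hpt), Hbelow, HQm. apply max_not_above_in.
Qed.

Lemma le_of_points_below a b : D a -> (forall p, is_point p -> p ≤ a -> p ≤ b) -> a ≤ b.
Proof.
  intros Ha H. apply NNPP. intro Hab.
  destruct (point_outside_ideal (fun x => x ≤ b) a (le_is_ideal b) Ha Hab)
    as [p [Hp [Hpa [Hpb _]]]].
  exact (Hpb (H p Hp Hpa)).
Qed.

(* As [p] is join-prime in D, this says [p ≰ q ⇒ κ q] whenever [q ⇒ κ q] lies in D. *)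
Definition access p q : Prop := ~ p ≤ κ p ⊔ (q ⇒ κ q).

Lemma access_coimp p q : access p q <-> ~ q ⊓ (p ⇐ κ p) ≤ κ q.
Proof. unfold access. rewrite le_join_imp_iff. reflexivity. Qed.

Lemma point_le_join p a b : is_point p -> D a -> D b -> p ≤ a ⊔ b <-> p ≤ a \/ p ≤ b.
Proof.
  intros [_ [_ Hprime]] Ha Hb. split; [apply Hprime; assumption|].
  intros [H|H]; eapply le_trans; eauto using join_ub_l, join_ub_r.
Qed.

Lemma point_le_imp p a b : is_point p -> D a -> D b -> D (a ⇒ b) ->
  p ≤ a ⇒ b <-> forall q, is_point q -> access p q -> q ≤ a -> q ≤ b.
Proof.
  intros Hp Ha Hb Hab. split.
  - intros H q Hq Hpq Hqa. apply NNPP. intro Hqb. apply Hpq.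
    apply le_trans with (q ⇒ κ q); [|apply join_ub_r].
    apply le_trans with (a ⇒ b); [exact H|].
    apply le_trans with (q ⇒ b); [apply imp_antitone_l, Hqa|].
    apply imp_monotone_r, le_max_not_above; assumption.
  - intro H. apply NNPP. intro Hpab.
    set (Q x := p ≤ κ p ⊔ (x ⇒ b)).
    assert (HQ : is_ideal Q).
    { split; [|split]; unfold Q.
      - rewrite imp_top_of_le by apply bot_le.
        apply le_trans with ⊤; [apply le_top|apply join_ub_r].
      - intros x y Hx Hy. rewrite imp_join.
        eapply le_trans; [apply (meet_glb _ _ _ Hx Hy)|apply join_meet_distr_le].
      - intros x y Hxy Hy. eapply le_trans; [exact Hy|].
        apply join_mono; [apply le_refl|apply imp_antitone_l, Hxy]. }
    assert (HQa : ~ Q a).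
    { intro HQa. apply (point_not_le_max p Hp). eapply le_trans; [exact HQa|].
      apply join_lub; [apply le_refl|apply le_max_not_above; assumption]. }
    destruct (point_outside_ideal Q a HQ Ha HQa) as [q [Hq [Hqa [HQq HQm]]]].
    assert (Hqb : ~ q ≤ b).
    { intro Hqb. apply HQq. unfold Q. rewrite imp_top_of_le by exact Hqb.
      apply le_trans with ⊤; [apply le_top|apply join_ub_r]. }
    apply Hqb, H; [exact Hq| |exact Hqa].
    intro Hpq. apply HQq. unfold Q.
    (* [q ⇒ κ q = q ⇒ q ⊓ κ q], so [imp_trans] through [q ⊓ κ q] yields [q ⇒ b]. *)
    eapply le_trans; [apply (meet_glb _ _ _ Hpq HQm)|].
    eapply le_trans; [apply join_meet_distr_le|]. apply join_mono; [apply le_refl|].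
    eapply le_trans; [|apply (imp_trans A q (q ⊓ κ q) b)]. apply meet_mono; [|apply le_refl].
    rewrite imp_meet, imp_refl. apply meet_glb; [apply le_top|apply le_refl].
Qed.

Lemma point_le_coimp q a b : is_point q -> D a -> D b -> D (a ⇐ b) ->
  q ≤ a ⇐ b <-> exists p, is_point p /\ access p q /\ p ≤ a /\ ~ p ≤ b.
Proof.
  intros Hq Ha Hb Hab. split.
  - intro H. set (Q x := q ⊓ (x ⇐ b) ≤ κ q).
    assert (HQ : is_ideal Q).
    { split; [|split]; unfold Q.
      - apply le_trans with ⊥; [|apply bot_le].
        apply le_trans with (⊥ ⇐ b); [apply meet_lb_r|apply coimp_le_bot, bot_le].
      - intros x y Hx Hy. rewrite coimp_join, meet_join_distr. apply join_lub; assumption.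
      - intros x y Hxy Hy. eapply le_trans; [|exact Hy].
        apply meet_mono; [apply le_refl|apply coimp_monotone_l, Hxy]. }
    assert (HQa : ~ Q a).
    { intro HQa. apply (point_not_le_max q Hq). eapply le_trans; [|exact HQa].
      apply meet_glb; [apply le_refl|exact H]. }
    destruct (point_outside_ideal Q a HQ Ha HQa) as [p [Hp [Hpa [HQp HQm]]]].
    exists p. split; [exact Hp|split; [|split; [exact Hpa|]]].
    + apply access_coimp. intro Hpq. apply HQp. unfold Q.
      (* [coimp_trans] through [p ⊓ κ p], using [p ⇐ p ⊓ κ p = p ⇐ κ p]. *)
      eapply le_trans; [apply meet_mono; [apply le_refl|apply (coimp_trans A p (p ⊓ κ p) b)]|].
      rewrite meet_join_distr. apply join_lub; [|exact HQm].
      eapply le_trans; [|exact Hpq]. apply meet_mono; [apply le_refl|].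
      rewrite coimp_meet, coimp_refl. apply join_lub; [apply bot_le|apply le_refl].
    + intro Hpb. apply HQp. unfold Q. apply le_trans with ⊥; [|apply bot_le].
      apply le_trans with (p ⇐ b); [apply meet_lb_r|apply coimp_le_bot, Hpb].
  - intros [p [Hp [Hpq [Hpa Hpb]]]]. apply NNPP. intro Hqab. apply access_coimp in Hpq. apply Hpq.
    apply le_trans with (a ⇐ b); [|apply le_max_not_above; assumption].
    eapply le_trans; [apply meet_lb_r|]. eapply le_trans; [apply coimp_monotone_l, Hpa|].
    apply coimp_antitone_r, le_max_not_above; assumption.
Qed.

Definition point : Type := {p : A | is_point p}.

Definition frame_algebra : WHBAlgebra :=
  complex_algebra point (fun p q => access (proj1_sig p) (proj1_sig q)).

Lemma frame_algebra_finite : finite_algebra frame_algebra.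
Proof.
  apply complex_algebra_finite, (listing_sig is_point sublattice_list).
  intros p Hp. apply in_sublattice_list, Hp.
Qed.

Definition points_below (a : A) : frame_algebra := fun p => proj1_sig p ≤ a.

Lemma points_below_injective a b : D a -> D b -> points_below a = points_below b -> a = b.
Proof.
  intros Ha Hb E.
  assert (Hiff : forall p (Hp : is_point p), p ≤ a <-> p ≤ b).
  { intros p Hp. change (points_below a (exist _ p Hp) <-> points_below b (exist _ p Hp)).
    rewrite E. reflexivity. }
  apply le_antisym; apply le_of_points_below; try assumption; intros p Hp; apply (Hiff p Hp).
Qed.

Lemma points_below_bot : points_below ⊥ = bot frame_algebra.
Proof.
  extensionality p. apply propositional_extensionality.
  split; [apply (proj2 (proj2_sig p))|intros []].
Qed.

Lemma points_below_top : points_below ⊤ = top frame_algebra.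
Proof.
  extensionality p. apply propositional_extensionality. split; [split|intros _; apply le_top].
Qed.

Lemma points_below_meet a b :
  points_below (a ⊓ b) = meet frame_algebra (points_below a) (points_below b).
Proof. extensionality p. apply propositional_extensionality, le_meet_iff. Qed.

Lemma points_below_join a b : D a -> D b ->
  points_below (a ⊔ b) = join frame_algebra (points_below a) (points_below b).
Proof.
  intros Ha Hb. extensionality p. apply propositional_extensionality, point_le_join;
    [apply proj2_sig|assumption..].
Qed.

Lemma points_below_imp a b : D a -> D b -> D (a ⇒ b) ->
  points_below (a ⇒ b) = imp frame_algebra (points_below a) (points_below b).
Proof.
  intros Ha Hb Hab. extensionality p. apply propositional_extensionality.
  destruct p as [p Hp]. unfold points_below; simpl. rewrite point_le_imp by assumption. split.
  - intros H [q Hq]. exact (H q Hq).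
  - intros H q Hq. exact (H (exist _ q Hq)).
Qed.

Lemma points_below_coimp a b : D a -> D b -> D (a ⇐ b) ->
  points_below (a ⇐ b) = coimp frame_algebra (points_below a) (points_below b).
Proof.
  intros Ha Hb Hab. extensionality q. apply propositional_extensionality.
  destruct q as [q Hq]. unfold points_below; simpl. rewrite point_le_coimp by assumption. split.
  - intros [p [Hp H]]. exists (exist _ p Hp). exact H.
  - intros [[p Hp] H]. exists p. split; [exact Hp|exact H].
Qed.

Lemma points_below_eval v u : (forall w, In w (subterms u) -> D (eval A v w)) ->
  eval frame_algebra (fun n => points_below (v n)) u = points_below (eval A v u).
Proof.
  induction u as [n|a IHa b IHb|a IHa b IHb|a IHa b IHb|a IHa b IHb| |]; intro Hsub; simpl;
    try (rewrite IHa, IHb by (intros w Hw; apply Hsub; simpl; auto with datatypes); symmetry).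
  - reflexivity.
  - apply points_below_meet.
  - apply points_below_join; [apply (Hsub a)|apply (Hsub b)];
      simpl; auto using in_subterms_self with datatypes.
  - apply points_below_imp; [apply (Hsub a)|apply (Hsub b)|apply (Hsub (tImp a b))];
      simpl; auto using in_subterms_self with datatypes.
  - apply points_below_coimp; [apply (Hsub a)|apply (Hsub b)|apply (Hsub (tCoimp a b))];
      simpl; auto using in_subterms_self with datatypes.
  - symmetry. apply points_below_bot.
  - symmetry. apply points_below_top.
Qed.

End Filtration.
End WHBTheory.

Theorem corollary6p20 :
  forall s t : term,
    (exists A : WHBAlgebra, fails_in A s t) ->
    exists A : WHBAlgebra, finite_algebra A /\ fails_in A s t.
Proof.
  intros s t [A [v Hv]].
  set (G := map (eval A v) (subterms s ++ subterms t)).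
  assert (HG : forall w, In w (subterms s ++ subterms t) -> in_sublattice A G (eval A v w)).
  { intros w Hw. apply in_sublattice_gen, in_map, Hw. }
  exists (frame_algebra A G). split; [apply frame_algebra_finite|].
  exists (fun n => points_below A G (v n)).
  rewrite !points_below_eval by (intros w Hw; apply HG, in_or_app; auto).
  intro E. apply Hv, (points_below_injective A G); [apply HG..|exact E];
    apply in_or_app; auto using in_subterms_self.
Qed.
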